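(* On the Heisenberg group $H=\langle a,b,c\mid ac=ca,\ bc=cb,\ [a,b]=c\rangle$ there exist length functions $l$ which are not stable norms, i.e. there is no function $L:H\to[0,\infty)$ with $L(gh)\leq L(g)+L(h)$ and $L(g)=L(g^{-1})$ for all $g,h$ such that $l(g)=\lim_{k\to\infty}L(g^{k})/k$ for all $g\in H$.
   Context: A length function on a group $G$ is a function $l:G\to[0,\infty)$ such that $l(g^{n})=|n|\,l(g)$ for all $g\in G,n\in\mathbb{Z}$; $l(hgh^{-1})=l(g)$ for all $g,h$; and $l(ab)\leq l(a)+l(b)$ whenever $a,b$ commute. *)

From Stdlib Require Import ZArith Reals.
Open Scope R_scope.

(* Concrete model of the discrete Heisenberg group
   H = < a, b, c | ac = ca, bc = cb, [a,b] = c >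
   as Z^3 with (x,y,z)(x',y',z') = (x+x', y+y', z+z'+x*y').
   a = (1,0,0), b = (0,1,0), c = (0,0,1); then a b a^-1 b^-1 = c. *)
Record heis : Type := Heis { hx : Z; hy : Z; hz : Z }.

Definition hmul (g h : heis) : heis :=
  Heis (hx g + hx h)%Z (hy g + hy h)%Z (hz g + hz h + hx g * hy h)%Z.

Definition hone : heis := Heis 0 0 0.

Definition hinv (g : heis) : heis :=
  Heis (- hx g)%Z (- hy g)%Z (- hz g + hx g * hy g)%Z.

Definition ha : heis := Heis 1 0 0.
Definition hb : heis := Heis 0 1 0.
Definition hc : heis := Heis 0 0 1.

Fixpoint hpow_nat (g : heis) (n : nat) : heis :=
  match n with
  | O => hone
  | S m => hmul g (hpow_nat g m)
  end.

Definition hpow (g : heis) (n : Z) : heis :=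
  match n with
  | Z0 => hone
  | Zpos p => hpow_nat g (Pos.to_nat p)
  | Zneg p => hpow_nat (hinv g) (Pos.to_nat p)
  end.

Definition is_length_function (l : heis -> R) : Prop :=
  (forall g, 0 <= l g) /\
  (forall g (n : Z), l (hpow g n) = IZR (Z.abs n) * l g) /\
  (forall g h, l (hmul (hmul h g) (hinv h)) = l g) /\
  (forall a b, hmul a b = hmul b a -> l (hmul a b) <= l a + l b).

Definition is_stable_norm (l : heis -> R) : Prop :=
  exists L : heis -> R,
    (forall g, 0 <= L g) /\
    (forall g h, L (hmul g h) <= L g + L h) /\
    (forall g, L g = L (hinv g)) /\
    (forall g, Un_cv (fun k : nat => L (hpow_nat g k) / INR k) (l g)).

(* The length function is |x| on the diagonal x = y of the abelianization
   Z^2 and 0 off it.  Two commuting elements have parallel images in Z^2, so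
   either both lie on the diagonal or their product projects to 0; this gives
   subadditivity.  A stable norm, on the other hand, is subadditive on all of
   H: since (2,2,2)^k = a^k b^(2k) a^k, its value at (2,2,2) is at most
   2 l(a) + 2 l(b) = 0, whereas l(2,2,2) = 2. *)

From Stdlib Require Import ZArith Reals Lia Lra.
Open Scope R_scope.

Lemma hmul_assoc (g h k : heis) : hmul (hmul g h) k = hmul g (hmul h k).
Proof. destruct g, h, k; unfold hmul; simpl; f_equal; ring. Qed.

Lemma hpow_nat_add (g : heis) (m n : nat) :
  hpow_nat g (m + n) = hmul (hpow_nat g m) (hpow_nat g n).
Proof.
  induction m as [|m IH]; simpl.
  - destruct (hpow_nat g n); unfold hmul; simpl; f_equal; ring.
  - rewrite IH, hmul_assoc; reflexivity.
Qed.

Lemma hx_hpow_nat (g : heis) (n : nat) : hx (hpow_nat g n) = (Z.of_nat n * hx g)%Z.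
Proof.
  induction n as [|n IH]; [reflexivity|].
  cbn [hpow_nat hmul hx hy]. rewrite IH, Nat2Z.inj_succ; lia.
Qed.

Lemma hy_hpow_nat (g : heis) (n : nat) : hy (hpow_nat g n) = (Z.of_nat n * hy g)%Z.
Proof.
  induction n as [|n IH]; [reflexivity|].
  cbn [hpow_nat hmul hx hy]. rewrite IH, Nat2Z.inj_succ; lia.
Qed.

Lemma hx_hpow (g : heis) (n : Z) : hx (hpow g n) = (n * hx g)%Z.
Proof.
  destruct n as [|p|p]; unfold hpow; [reflexivity| |];
    rewrite hx_hpow_nat, positive_nat_Z; cbn [hinv hx]; lia.
Qed.

Lemma hy_hpow (g : heis) (n : Z) : hy (hpow g n) = (n * hy g)%Z.
Proof.
  destruct n as [|p|p]; unfold hpow; [reflexivity| |];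
    rewrite hy_hpow_nat, positive_nat_Z; cbn [hinv hy]; lia.
Qed.

Lemma hmul_comm_cross (g h : heis) :
  hmul g h = hmul h g -> (hx g * hy h = hx h * hy g)%Z.
Proof. intros E. apply (f_equal hz) in E. simpl in E. lia. Qed.

Lemma hmul_comm_diag_sum (g h : heis) :
  hmul g h = hmul h g -> (hx g + hx h = hy g + hy h)%Z ->
  (hx g = hy g /\ hx h = hy h) \/ (hx g + hx h = 0)%Z.
Proof.
  intros Ecomm Esum. pose proof (hmul_comm_cross g h Ecomm) as Ecross.
  destruct (Z.eq_dec (hx g) (hy g)) as [Eg|Eg]; [left; lia|right].
  (* with s = hx g + hx h, the cross relation reduces to s * (hx g - hy g) = 0 *)
  assert ((hx g + hx h) * (hx g - hy g) = 0)%Z by nia. nia.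
Qed.

Definition diag_length (g : heis) : R :=
  if Z.eq_dec (hx g) (hy g) then IZR (Z.abs (hx g)) else 0.

Lemma diag_length_ge0 (g : heis) : 0 <= diag_length g.
Proof.
  unfold diag_length. destruct (Z.eq_dec _ _); [apply IZR_le; lia | lra].
Qed.

Lemma diag_length_hpow (g : heis) (n : Z) :
  diag_length (hpow g n) = IZR (Z.abs n) * diag_length g.
Proof.
  unfold diag_length. rewrite hx_hpow, hy_hpow.
  destruct (Z.eq_dec (hx g) (hy g)) as [E|E].
  - rewrite E. destruct (Z.eq_dec _ _) as [_|E']; [|congruence].
    rewrite Z.abs_mul, mult_IZR; reflexivity.
  - rewrite Rmult_0_r. destruct (Z.eq_dec (n * hx g) (n * hy g)) as [E'|_]; [|reflexivity].
    destruct (Z.eq_dec n 0) as [->|Hn]; [reflexivity|].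
    exfalso. exact (E (Z.mul_reg_l _ _ _ Hn E')).
Qed.

Lemma diag_length_conj (g h : heis) :
  diag_length (hmul (hmul h g) (hinv h)) = diag_length g.
Proof.
  unfold diag_length; simpl.
  replace (hx h + hx g + - hx h)%Z with (hx g) by ring.
  replace (hy h + hy g + - hy h)%Z with (hy g) by ring.
  reflexivity.
Qed.

Lemma diag_length_comm_subadd (g h : heis) :
  hmul g h = hmul h g -> diag_length (hmul g h) <= diag_length g + diag_length h.
Proof.
  intros Ecomm.
  pose proof (diag_length_ge0 g). pose proof (diag_length_ge0 h).
  unfold diag_length at 1; simpl.
  destruct (Z.eq_dec (hx g + hx h) (hy g + hy h)) as [Esum|]; [|lra].
  destruct (hmul_comm_diag_sum g h Ecomm Esum) as [[Eg Eh]|Ezero].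
  - unfold diag_length.
    destruct (Z.eq_dec (hx g) (hy g)); [|contradiction].
    destruct (Z.eq_dec (hx h) (hy h)); [|contradiction].
    rewrite <- plus_IZR. apply IZR_le, Z.abs_triangle.
  - rewrite Ezero; simpl. lra.
Qed.

Lemma diag_length_is_length_function : is_length_function diag_length.
Proof.
  repeat split.
  - exact diag_length_ge0.
  - exact diag_length_hpow.
  - exact diag_length_conj.
  - exact diag_length_comm_subadd.
Qed.

(* No hypothesis k <> 0 is needed: / 0 = 0. *)
Lemma Rdiv_INR_le_compat (x y : R) (k : nat) : x <= y -> x / INR k <= y / INR k.
Proof.
  intros Hxy. apply Rmult_le_compat_r; [|exact Hxy].
  destruct k as [|k].
  - simpl; rewrite Rinv_0; lra.
  - left. apply Rinv_0_lt_compat, lt_0_INR; lia.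
Qed.

Lemma stable_limit_le_of_pow_decomp (L : heis -> R) (g u v : heis) (lg lu lv : R) :
  (forall x y, L (hmul x y) <= L x + L y) ->
  (forall k, hpow_nat g k = hmul (hmul (hpow_nat u k) (hpow_nat v (2 * k))) (hpow_nat u k)) ->
  Un_cv (fun k => L (hpow_nat g k) / INR k) lg ->
  Un_cv (fun k => L (hpow_nat u k) / INR k) lu ->
  Un_cv (fun k => L (hpow_nat v k) / INR k) lv ->
  lg <= 2 * lu + 2 * lv.
Proof.
  intros L_subadd Edecomp Cg Cu Cv.
  apply (Rle_trans _ (lu + lv + lv + lu)); [|lra].
  refine (Rle_cv_lim _ Cg (CV_plus _ _ _ _ (CV_plus _ _ _ _ (CV_plus _ _ _ _ Cu Cv) Cv) Cu)).
  intros k. unfold Rdiv. rewrite <- !Rmult_plus_distr_r.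
  apply Rdiv_INR_le_compat.
  rewrite Edecomp.
  replace (2 * k)%nat with (k + k)%nat by lia. rewrite hpow_nat_add.
  pose proof (L_subadd (hmul (hpow_nat u k) (hmul (hpow_nat v k) (hpow_nat v k))) (hpow_nat u k)).
  pose proof (L_subadd (hpow_nat u k) (hmul (hpow_nat v k) (hpow_nat v k))).
  pose proof (L_subadd (hpow_nat v k) (hpow_nat v k)).
  lra.
Qed.

Definition hd : heis := Heis 2 2 2.

Lemma hpow_nat_ha (k : nat) : hpow_nat ha k = Heis (Z.of_nat k) 0 0.
Proof.
  induction k as [|k IH]; [reflexivity|].
  cbn [hpow_nat]. rewrite IH, Nat2Z.inj_succ. unfold hmul; cbn [ha hx hy hz]. f_equal; ring.
Qed.

Lemma hpow_nat_hb (k : nat) : hpow_nat hb k = Heis 0 (Z.of_nat k) 0.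
Proof.
  induction k as [|k IH]; [reflexivity|].
  cbn [hpow_nat]. rewrite IH, Nat2Z.inj_succ. unfold hmul; cbn [hb hx hy hz]. f_equal; ring.
Qed.

Lemma hpow_nat_hd (k : nat) :
  hpow_nat hd k = Heis (2 * Z.of_nat k) (2 * Z.of_nat k) (2 * Z.of_nat k * Z.of_nat k).
Proof.
  induction k as [|k IH]; [reflexivity|].
  cbn [hpow_nat]. rewrite IH, Nat2Z.inj_succ. unfold hmul; cbn [hd hx hy hz]. f_equal; ring.
Qed.

Lemma hpow_nat_hd_decomp (k : nat) :
  hpow_nat hd k = hmul (hmul (hpow_nat ha k) (hpow_nat hb (2 * k))) (hpow_nat ha k).
Proof.
  rewrite hpow_nat_hd, hpow_nat_ha, hpow_nat_hb, Nat2Z.inj_mul.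
  unfold hmul; cbn [hx hy hz]. f_equal; ring.
Qed.

Theorem corollary25 :
  exists l : heis -> R, is_length_function l /\ ~ is_stable_norm l.
Proof.
  exists diag_length. split; [exact diag_length_is_length_function|].
  intros [L [_ [L_subadd [_ L_cv]]]].
  pose proof (stable_limit_le_of_pow_decomp L hd ha hb _ _ _ L_subadd
                hpow_nat_hd_decomp (L_cv hd) (L_cv ha) (L_cv hb)) as Hle.
  unfold diag_length in Hle; simpl in Hle. lra.
Qed.
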